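(* Let $\mathbb{F}$ be a field, $n\ge 1$, and $d=2d'$ an even positive integer. Let $X^1,\dots,X^d$ be pairwise disjoint sets of variables $X^i=\{x^i_{jk}:j,k\in[n]\}$, $X=\bigcup_iX^i$, and $A^i$ the $n\times n$ matrix with $(j,k)$ entry $x^i_{jk}$. Let $B$ be the bijection from $X$ onto $Y\cup Z$ that maps each variable $x^{2i-1}_{jk}$ of an odd-numbered matrix to a distinct variable $y^{2i-1}_{jk}\in Y$ and each variable $x^{2i}_{jk}$ of an even-numbered matrix to a distinct variable $z^{2i}_{jk}\in Z$. Let $f_{ij}$ be the $(i,j)$ entry of $\prod_{k\in[d]}A^k$. Then: (1) for all $i,j\in[n]$, $\mathrm{rank}(M_{f_{ij}^B})=n^{d-1}$; (2) for any $i\in[n]$ and $j\neq j'\in[n]$, the sets of non-zero columns of $M_{f_{ij}^B}$ and $M_{f_{ij'}^B}$ are disjoint.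
   Context: $f^B$ denotes $f$ with each $x$ replaced by $B(x)$. For $g\in\mathbb{F}[Y,Z]$, the polynomial coefficient matrix $M_g$ has rows indexed by monic multilinear monomials $p$ in $Y$ and columns by monic multilinear monomials $q$ in $Z$, with $M_g(p,q)=G$ iff $g=pq\,G+Q$ uniquely with $G$ containing only variables present in $p,q$ and $Q$ having no monomial divisible by $pq$ that contains only variables present in $p,q$. For multilinear $g$ (as here) the entries of $M_g$ are field constants, namely $M_g(p,q)$ is the coefficient of $pq$ in $g$. *)

From HB Require Import structures.
From mathcomp Require Import all_boot all_order all_algebra.
From mathcomp Require Import mpoly.
Set Implicit Arguments. Unset Strict Implicit. Unset Printing Implicit Defensive.
Import GRing.Theory.
Local Open Scope ring_scope.

(* Variables X = union of X^1..X^d, x^l_{jk} indexed by (l, j, k) (0-based: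
   l : 'I_d is the matrix index, so matrix number l+1 in the paper). *)
Definition Xvar (n d : nat) := ('I_d * 'I_n * 'I_n)%type.
Definition NX (n d : nat) := #|{: Xvar n d}|.
Definition xv (n d : nat) (l : 'I_d) (j k : 'I_n) : 'I_(NX n d) :=
  enum_rank ((l, j, k) : Xvar n d).

Definition Amx (F : fieldType) (n d : nat) (l : 'I_d) : 'M[{mpoly F[NX n d]}]_n :=
  \matrix_(j, k) 'X_(xv l j k).

Definition prodA (F : fieldType) (n d : nat) : 'M[{mpoly F[NX n d]}]_n :=
  foldr (@mulmx _ n n n) 1%:M [seq Amx F n l | l <- enum 'I_d].

Definition fIMM (F : fieldType) (n d : nat) (i j : 'I_n) : {mpoly F[NX n d]} :=
  prodA F n d i j.

(* Variables Y u Z: (false, (i,j,k)) is y^{2i+1}_{jk} (0-based i : 'I_d'),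
   (true, (i,j,k)) is z^{2i+2}_{jk}. *)
Definition Wvar (n d' : nat) := ('I_d' * 'I_n * 'I_n)%type.
Definition YZvar (n d' : nat) := (bool * Wvar n d')%type.
Definition NYZ (n d' : nat) := #|{: YZvar n d'}|.
Definition yzv (n d' : nat) (b : bool) (w : Wvar n d') : 'I_(NYZ n d') :=
  enum_rank ((b, w) : YZvar n d').

Lemma half_ord_lt (d' : nat) (l : 'I_(d'.*2)) : (l./2 < d')%N.
Proof. by rewrite ltn_half_double. Qed.
Definition half_ord (d' : nat) (l : 'I_(d'.*2)) : 'I_d' := Ordinal (half_ord_lt l).

(* The bijection B : X -> Y u Z.  0-based matrix index l even (paper index
   l+1 odd) goes to Y, l odd (paper index even) goes to Z. *)
Definition Bvar (n d' : nat) (v : Xvar n d'.*2) : YZvar n d' :=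
  (odd v.1.1, (half_ord v.1.1, v.1.2, v.2)).

Definition applyB (F : fieldType) (n d' : nat) (g : {mpoly F[NX n d'.*2]})
  : {mpoly F[NYZ n d']} :=
  comp_mpoly [tuple 'X_(yzv (Bvar (enum_val v)).1 (Bvar (enum_val v)).2)
              | v < NX n d'.*2] g.

Definition monoYZ (n d' : nat) (p q : {set Wvar n d'}) : 'X_{1..NYZ n d'} :=
  (\sum_(w in p) mnm1 (yzv false w) + \sum_(w in q) mnm1 (yzv true w))%MM.

(* polynomial coefficient matrix M_g (g multilinear): rows = monic multilinear
   monomials in Y, columns = those in Z, entry = coefficient of pq in g.
   Rows/columns are enumerated via enum_val. *)
Definition Mcoef (F : fieldType) (n d' : nat) (g : {mpoly F[NYZ n d']})
  : 'M[F]_(#|{: {set Wvar n d'}}|, #|{: {set Wvar n d'}}|) :=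
  \matrix_(a, b) g@_(monoYZ (enum_val a) (enum_val b)).

Definition nzcols (F : fieldType) (m k : nat) (M : 'M[F]_(m, k)) : {set 'I_k} :=
  [set b | [exists a, M a b != 0]].

From HB Require Import structures.
From mathcomp Require Import all_boot all_order all_algebra.
From mathcomp Require Import mpoly.
Set Implicit Arguments. Unset Strict Implicit. Unset Printing Implicit Defensive.
Import GRing.Theory.
Local Open Scope ring_scope.

(* Expanding the matrix product, f_ij is the sum over all paths
   i = k_0, k_1, ..., k_d = j of the monomials x^1_{k_0 k_1} ... x^d_{k_{d-1} k_d}.
   After B, the path t contributes the monomial p(t) q(t), where p(t) collects
   its odd-numbered edges (in Y) and q(t) its even-numbered ones (in Z).
   Every internal vertex k_l lies on an edge of each parity, so t is determined
   by p(t) and also by q(t).  Hence M_{f_ij^B} = P^T Q for two 0/1 matrices P, Q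
   whose rows are the n^(d-1) paths and which satisfy P P^T = Q Q^T = 1, so its
   rank is the number of paths.  The last edge is even-numbered and ends at j,
   so a nonzero column q(t) determines j. *)

Lemma foldr_mulmx_path_sum (R : comNzRingType) (n : nat) (j : 'I_n) :
  forall (m : nat) (i : 'I_n) (As : seq 'M[R]_n), size As = m.+1 ->
  (foldr (@mulmx _ n n n) 1%:M As) i j =
  \sum_(t : m.-tuple 'I_n) \prod_(l < m.+1)
     As`_l (nth j (i :: t) l) (nth j (i :: t) l.+1).
Proof.
elim=> [|m IH] i [|A As] //= [size_As].
  case: As size_As => // _.
  rewrite mulmx1 (big_pred1 [tuple]) ?big_ord1 // => t.
  by apply/esym/eqP/tuple0.
rewrite mxE; under [LHS]eq_bigr => r _ do rewrite (IH r As size_As) big_distrr /=.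
rewrite pair_big (reindex (fun p : 'I_n * m.-tuple 'I_n => [tuple of p.1 :: p.2])) /=.
  apply: eq_bigr => -[r t] _ /=.
  by rewrite [RHS]big_ord_recl; congr (_ * _); apply: eq_bigr => l _.
exists (fun t : m.+1.-tuple 'I_n => (thead t, behead_tuple t)) => [[r t] _|t _] /=.
  by congr pair; apply/val_inj.
by rewrite [t in RHS]tuple_eta; apply/val_inj.
Qed.

Section IncidenceMatrix.
Variables (R : comNzRingType) (T S : finType).

Definition incmx (f : T -> S) : 'M[R]_(#|T|, #|S|) :=
  \matrix_(k, a) (f (enum_val k) == enum_val a)%:R.

Lemma incmx_mul_tr (f : T -> S) : injective f -> incmx f *m (incmx f)^T = 1%:M.
Proof.
move=> f_inj; apply/matrixP => k k'; rewrite !mxE.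
under eq_bigr => a _ do rewrite !mxE -natrM mulnb.
rewrite -(big_enum_val (fun s => ((f (enum_val k) == s) && (f (enum_val k') == s))%:R)) /=.
rewrite (bigD1 (f (enum_val k))) //= eqxx big1 ?addr0; last first.
  by move=> s /negbTE; rewrite eq_sym => ->.
by rewrite eq_sym (inj_eq f_inj) (inj_eq enum_val_inj).
Qed.

Lemma trmx_incmx_mulE (f g : T -> S) a b :
  ((incmx f)^T *m incmx g) a b =
  \sum_(t : T) ((f t == enum_val a) && (g t == enum_val b))%:R.
Proof.
rewrite mxE (big_enum_val (fun t => ((f t == enum_val a) && (g t == enum_val b))%:R)).
by apply: eq_bigr => k _; rewrite !mxE -natrM mulnb.
Qed.

Lemma trmx_incmx_mul_nzcol (f g : T -> S) a b :
  ((incmx f)^T *m incmx g) a b != 0 -> exists t, g t = enum_val b.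
Proof.
rewrite trmx_incmx_mulE => nz.
have [t /eqP gt | no_t] := pickP (fun t => g t == enum_val b); first by exists t.
by move: nz; rewrite big1 ?eqxx // => t _; rewrite no_t andbF.
Qed.

End IncidenceMatrix.

Lemma mxrank_trmx_mul_coisometry (F : fieldType) k p q
    (A : 'M[F]_(k, p)) (B : 'M[F]_(k, q)) :
  A *m A^T = 1%:M -> B *m B^T = 1%:M -> \rank (A^T *m B) = k.
Proof.
move=> AAt BBt; apply/eqP; rewrite eqn_leq; apply/andP; split.
  by rewrite (leq_trans (mxrankM_maxl _ _)) // mxrank_tr rank_leq_row.
have AXB : A *m (A^T *m B) *m B^T = 1%:M by rewrite mulmxA AAt mul1mx BBt.
by rewrite -{1}(mxrank1 F k) -AXB (leq_trans (mxrankM_maxl _ _)) // mxrankM_maxr.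
Qed.

Lemma odd_half_inj (k k' : nat) : odd k = odd k' -> k./2 = k'./2 -> k = k'.
Proof.
by move=> odd_kk' half_kk'; rewrite -[k]odd_double_half odd_kk' half_kk' odd_double_half.
Qed.

Lemma mnm_sum_yzvE (n d' : nat) (p : {set Wvar n d'}) b b' w :
  (\sum_(w0 in p) U_(yzv b w0))%MM (yzv b' w) = ((b == b') && (w \in p)) :> nat.
Proof.
rewrite mnm_sumE; under eq_bigr => w0 _ do rewrite mnm1E (inj_eq enum_rank_inj) xpair_eqE.
have [_ | _] := boolP (b == b'); last by rewrite big1.
case: (boolP (w \in p)) => [pw | p'w].
  by rewrite (bigD1 w) //= eqxx big1 // => w0 /andP[_ /negbTE ->].
by rewrite big1 // => w0 pw0; apply/eqP; rewrite eqb0; apply: contraNneq p'w => <-.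
Qed.

Lemma monoYZE (n d' : nat) (p q : {set Wvar n d'}) b w :
  monoYZ p q (yzv b w) = (w \in if b then q else p) :> nat.
Proof. by rewrite mnmDE !mnm_sum_yzvE; case: b; rewrite ?addn0. Qed.

Lemma monoYZ_eq (n d' : nat) (p q p' q' : {set Wvar n d'}) :
  (monoYZ p q == monoYZ p' q') = (p == p') && (q == q').
Proof.
apply/eqP/andP => [E | [/eqP-> /eqP->] //].
have memE b w : (w \in if b then q else p) = (w \in if b then q' else p').
  by have /(congr1 odd) := congr1 (fun mm : 'X_{1..NYZ n d'} => mm (yzv b w)) E;
    rewrite /= !monoYZE !oddb.
by split; apply/eqP/setP => w; [apply: (memE false) | apply: (memE true)].
Qed.

Section IteratedMatrixProduct.
Variables (F : fieldType) (n e : nat).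
Local Notation d := (e.+1).*2.
Local Notation path := ((e.*2).+1.-tuple 'I_n).

(* A path stores its d - 1 internal vertices; the default of [nth] supplies the
   final vertex j. *)
Definition path_vertex (i j : 'I_n) (t : path) (l : nat) : 'I_n := nth j (i :: t) l.

Definition edge_var i j t (l : 'I_d) : Wvar n e.+1 :=
  (half_ord l, path_vertex i j t l, path_vertex i j t l.+1).

Definition edge_set i j t (b : bool) : {set Wvar n e.+1} :=
  [set edge_var i j t l | l : 'I_d & odd l == b].

Lemma fIMM_path_sum i j : @fIMM F n d i j =
  \sum_(t : path) \prod_(l < d) 'X_(xv l (path_vertex i j t l) (path_vertex i j t l.+1)).
Proof.
rewrite /fIMM /prodA (@foldr_mulmx_path_sum _ _ j (e.*2).+1); last first.
  by rewrite size_map size_enum_ord.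
apply: eq_bigr => t _; apply: eq_bigr => l _.
by rewrite (nth_map l) ?size_enum_ord // nth_ord_enum mxE.
Qed.

Lemma applyB_X (l : 'I_d) a b :
  applyB ('X_(xv l a b) : {mpoly F[NX n d]}) = 'X_(yzv (odd l) (half_ord l, a, b)).
Proof. by rewrite /applyB comp_mpolyXU -tnth_nth tnth_mktuple /xv enum_rankK. Qed.

Lemma edge_var_inj i j t b : {in [set l : 'I_d | odd l == b] &, injective (edge_var i j t)}.
Proof.
move=> l l'; rewrite !inE => /eqP odd_l /eqP odd_l' [half_ll' _ _].
by apply/val_inj/odd_half_inj; rewrite ?odd_l ?odd_l'.
Qed.

Lemma sum_edge_mnm i j t :
  (\sum_(l < d) U_(yzv (odd l) (edge_var i j t l)))%MM =
  monoYZ (edge_set i j t false) (edge_set i j t true).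
Proof.
rewrite /monoYZ /edge_set !big_imset /=; try exact: edge_var_inj.
rewrite [LHS](bigID (fun l : 'I_d => odd l)) addmC.
by congr (_ + _)%MM; apply: eq_big => l; rewrite ?inE; case: (odd l).
Qed.

Lemma applyB_fIMM i j : applyB (@fIMM F n d i j) =
  \sum_(t : path) 'X_[monoYZ (edge_set i j t false) (edge_set i j t true)].
Proof.
rewrite fIMM_path_sum /applyB rmorph_sum; apply: eq_bigr => t _.
rewrite rmorph_prod -sum_edge_mnm (big_morph (fun m => 'X_[m]) (@mpolyXD _ _) (@mpolyX0 _ _)).
by apply: eq_bigr => l _; rewrite -applyB_X.
Qed.

Lemma Mcoef_fIMM i j : Mcoef (applyB (@fIMM F n d i j)) =
  (incmx F (edge_set i j ^~ false))^T *m incmx F (edge_set i j ^~ true).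
Proof.
apply/matrixP => a b; rewrite trmx_incmx_mulE mxE applyB_fIMM raddf_sum.
by apply: eq_bigr => t _; rewrite /= mcoeffX monoYZ_eq.
Qed.

Lemma edge_set_vertex i j j' t t' b : edge_set i j t b = edge_set i j' t' b ->
  forall l : 'I_d, odd l = b ->
  path_vertex i j t l = path_vertex i j' t' l /\
  path_vertex i j t l.+1 = path_vertex i j' t' l.+1.
Proof.
move=> E l odd_l.
have : edge_var i j t l \in edge_set i j' t' b.
  by rewrite -E; apply/imsetP; exists l; rewrite // inE odd_l.
case/imsetP => l'; rewrite inE => /eqP odd_l' [half_ll' -> ->].
by have -> // : l = l' by apply/val_inj/odd_half_inj; rewrite ?odd_l.
Qed.

Lemma edge_set_inj i j b : injective (edge_set i j ^~ b).
Proof.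
move=> t t' E; apply: eq_from_tnth => x; rewrite !(tnth_nth j).
have lt_x1d : (x.+1 < d)%N by rewrite doubleS ltnS.
have [odd_x1 | odd'_x1] := eqVneq (odd x.+1) b.
  by have [] := edge_set_vertex E (l := Ordinal lt_x1d) odd_x1.
have odd_x : odd x = b by move: odd'_x1 => /=; case: (odd x); case: (b).
by have [] := edge_set_vertex E (l := Ordinal (ltnW lt_x1d)) odd_x.
Qed.

Lemma edge_set_last i j j' t t' : edge_set i j t true = edge_set i j' t' true -> j = j'.
Proof.
move=> E; have lt_last : ((e.*2).+1 < d)%N by rewrite doubleS.
have [_] := edge_set_vertex E (l := Ordinal lt_last) (negbT (odd_double e)).
by rewrite /path_vertex /= !nth_default ?size_tuple.
Qed.

End IteratedMatrixProduct.

Theorem lemma12 (F : fieldType) (n d' : nat) (hn : (0 < n)%N) (hd : (0 < d')%N) :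
  (forall i j : 'I_n,
      \rank (Mcoef (applyB (@fIMM F n d'.*2 i j))) = (n ^ (d'.*2 - 1))%N) /\
  (forall i j j' : 'I_n, j != j' ->
      [disjoint nzcols (Mcoef (applyB (@fIMM F n d'.*2 i j)))
              & nzcols (Mcoef (applyB (@fIMM F n d'.*2 i j')))]).
Proof.
case: d' hd => // e _.
split => [i j | i j j' neq_jj'].
  rewrite Mcoef_fIMM mxrank_trmx_mul_coisometry ?incmx_mul_tr //; try exact: edge_set_inj.
  by rewrite card_tuple card_ord doubleS subn1.
rewrite -setI_eq0 !Mcoef_fIMM; apply/eqP/setP => b; rewrite !inE.
apply/negbTE/negP => /andP[/existsP[a nz_j] /existsP[a' nz_j']].
have [t Et] := trmx_incmx_mul_nzcol nz_j; have [t' Et'] := trmx_incmx_mul_nzcol nz_j'.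
by move: neq_jj'; rewrite (edge_set_last (etrans Et (esym Et'))) eqxx.
Qed.
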